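(* Let $d\ge1$ and $p+q=2d$ with $p,q\ge 0$. Let $\mathcal{K}$ be a $d$-dimensional simplicial complex and let $\mathcal{T}$ be an induced subcomplex of $\mathcal{K}$ isomorphic to the $d$-skeleton of $\Delta^p\ast\partial\Delta^q$, such that every face of $\mathcal{K}$ containing $\Delta^p$ lies in $\mathcal{T}$. Let $\mathcal{L}$ be the complex obtained from $\mathcal{K}$ by replacing $\mathcal{T}$ by $\mathcal{T}'$, the $d$-skeleton of $\partial\Delta^p\ast\Delta^q$ (so all $d$-faces $\Delta^p\ast\rho$, $\rho\in\partial\Delta^q$, are deleted and all $d$-faces $\sigma\ast\Delta^q$, $\sigma\in\partial\Delta^p$, are added). Assume: (II.a) there is a vertex $v_0\in\mathcal{K}_0\setminus\mathcal{T}_0$ (equivalently $v_0\in\mathcal{L}_0\setminus\mathcal{T}'_0$); (II.b) $\widetilde{H}_i(\mathcal{K}-W;\mathbf{Z}_2)=0$ for all $0\le i\le d-1$, whenever $W=\mathcal{T}_0\setminus\rho$ for some face $\rho\in\mathcal{T}\cap\mathcal{T}'$. Then there is an operation assigning to every $i$-simplex $\rho\in\mathcal{K}\cap\mathcal{L}$, $0\le i\le d-1$, an $(i+1)$-chain $v_0\bullet\rho\in C_{i+1}(\mathcal{K}\cap\mathcal{L};\mathbf{Z}_2)$ such that, writing $v_0\bullet\vartheta:=\sum_{\rho\in\vartheta}v_0\bullet\rho$ for an $i$-chain $\vartheta\in C_i(\mathcal{K}\cap\mathcal{L};\mathbf{Z}_2)$: (1) every vertex $w\in\mathcal{T}_0$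 lying in the support of $v_0\bullet\vartheta$ already lies in the support of $\vartheta$; (2) if $\vartheta$ is an $i$-cycle, then $\partial(v_0\bullet\vartheta)=\vartheta$.
   Context: $\Delta^p$ denotes a fixed $p$-simplex (and the complex of all its faces), $\partial\Delta^q$ the boundary complex of a $q$-simplex, and $\ast$ the join; $\Delta^p$ and $\Delta^q$ are vertex-disjoint. $\mathcal{K}_0$ denotes the vertex set of $\mathcal{K}$. For a vertex set $W$, $\mathcal{K}-W$ is the subcomplex of faces of $\mathcal{K}$ containing no vertex of $W$. $\widetilde H_i$ is reduced simplicial homology. Chains are over $\mathbf{Z}_2$ and are identified with sets of simplices; the support of a chain is the union of the vertex sets of its simplices. *)

From mathcomp Require Import all_boot.
Set Implicit Arguments. Unset Strict Implicit. Unset Printing Implicit Defensive.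

Section Simplicial.
Variable V : finType.

Definition is_complex (K : {set {set V}}) : Prop :=
  set0 \notin K /\
  forall s t : {set V}, s \in K -> t \subset s -> t != set0 -> t \in K.

Definition verts (K : {set {set V}}) : {set V} := \bigcup_(s in K) s.

Definition faces (K : {set {set V}}) (i : nat) : {set {set V}} :=
  [set s in K | #|s| == i.+1].

(* K - W : faces of K containing no vertex of W *)
Definition cdel (K : {set {set V}}) (W : {set V}) : {set {set V}} :=
  [set s in K | [disjoint s & W]].

(* Z2-chains are sets of simplices.  Boundary (augmented, so that the
   boundary of a 0-chain with an odd number of vertices is the empty face
   set0; this yields reduced homology). *)
Definition bdry (c : {set {set V}}) : {set {set V}} :=
  [set t : {set V} | odd #|[set s in c | (t \subset s) && (#|s| == #|t|.+1)]|].

Definition rhom_vanish (K : {set {set V}}) (i : nat) : Prop :=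
  forall c : {set {set V}}, c \subset faces K i -> bdry c = set0 ->
  exists2 b : {set {set V}}, b \subset faces K i.+1 & bdry b = c.

(* d-skeleton of Delta^p * boundary(Delta^q), Delta^p on P, Delta^q on Q *)
Definition skel_join_bd (d : nat) (P Q : {set V}) : {set {set V}} :=
  [set s : {set V} | [&& s != set0, s \subset P :|: Q, ~~ (Q \subset s)
                       & #|s| <= d.+1]].

(* Z2-linear extension of a simplex-wise operation f to a chain th *)
Definition cext (f : {set V} -> {set {set V}}) (th : {set {set V}})
  : {set {set V}} :=
  [set s : {set V} | odd #|[set r in th | s \in f r]|].

End Simplicial.

From mathcomp Require Import all_boot.
Set Implicit Arguments. Unset Strict Implicit. Unset Printing Implicit Defensive.

(* The cone [v0 • rho] is built by induction on the dimension of [rho]: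
   [v0 • ∅ = v0], and for an i-face [rho] of K ∩ L the chain
   [rho + v0 • ∂rho] is an i-cycle supported in K - (T_0 \ rho).  Since
   [T_0 \ rho = T_0 \ (rho ∩ T_0)] and [rho ∩ T_0] is empty or a face of
   T ∩ T', (II.b) lets it bound, and any filling is taken as [v0 • rho].
   Every face of K - (T_0 \ rho) lies in L: a face of T outside T' contains
   Delta^p, so avoiding T_0 \ rho it would lie in [rho], which cannot
   contain Delta^p.  Linearity then gives [∂(v0 • th) = th + v0 • ∂th],
   hence property (2); property (1) holds face by face by construction. *)

Section Chains.
Variable V : finType.
Implicit Types (A B c K : {set {set V}}) (r s t W : {set V})
  (R S : {set V} -> {set V} -> bool) (f g : {set V} -> {set {set V}}).

Definition symd A B := (A :\: B) :|: (B :\: A).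

Lemma in_symd A B t : (t \in symd A B) = (t \in A) (+) (t \in B).
Proof. by rewrite !inE; case: (t \in A); case: (t \in B). Qed.

Lemma symds0 A : symd A set0 = A.
Proof. by apply/setP=> t; rewrite in_symd inE addbF. Qed.

Lemma symdss A : symd A A = set0.
Proof. by apply/setP=> t; rewrite in_symd addbb inE. Qed.

Lemma card_set_sum c (P : pred {set V}) :
  #|[set s in c | P s]| = \sum_(s in c) P s.
Proof.
rewrite -sum1_card big_mkcond [RHS]big_mkcond /=.
by apply: eq_bigr => s _; rewrite !inE; case: (s \in c); case: (P s).
Qed.

Lemma odd_sum_odd (I : Type) (r : seq I) (P : pred I) (F : I -> nat) :
  odd (\sum_(i <- r | P i) F i) = odd (\sum_(i <- r | P i) odd (F i)).
Proof. by elim/big_rec2: _ => // i x y _ IH; rewrite !oddD oddb IH. Qed.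

(* The Z2-linear map on chains whose matrix is the 0/1 relation R. *)
Definition chain_map R c := [set t | odd #|[set s in c | R s t]|].

Definition facet s t := (t \subset s) && (#|s| == #|t|.+1).

Lemma bdryE c : bdry c = chain_map facet c.
Proof. by []. Qed.

Lemma cextE f c : cext f c = chain_map (fun r s => s \in f r) c.
Proof. by []. Qed.

Lemma chain_mapE R c t : (t \in chain_map R c) = odd (\sum_(s in c) R s t).
Proof. by rewrite inE card_set_sum. Qed.

Lemma chain_map_sumE R c t :
  (t \in chain_map R c) = odd (\sum_s (s \in c) * R s t).
Proof.
rewrite chain_mapE big_mkcond /=; congr odd; apply: eq_bigr => s _.
by case: (s \in c); rewrite ?mul1n ?mul0n.
Qed.

Lemma eq_chain_map R S c : {in c, forall r, R r =1 S r} ->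
  chain_map R c = chain_map S c.
Proof.
by move=> eqRS; apply/setP=> t; rewrite !chain_mapE; congr odd;
  apply: eq_bigr => r /eqRS ->.
Qed.

Lemma chain_map_comp R S c :
  chain_map S (chain_map R c) =
  chain_map (fun r t => odd (\sum_s R r s * S s t)) c.
Proof.
apply/setP=> t; rewrite chain_map_sumE [RHS]chain_mapE.
transitivity (odd (\sum_s odd ((\sum_(r in c) R r s) * S s t))).
  by rewrite odd_sum_odd; congr odd; apply: eq_bigr => s _;
    rewrite chain_mapE !oddM !oddb.
rewrite -(odd_sum_odd _ _ (fun s => (\sum_(r in c) R r s) * S s t)).
under eq_bigr do rewrite big_distrl.
by rewrite exchange_big /= odd_sum_odd.
Qed.

Lemma chain_map_addr R S c :
  chain_map (fun r t => R r t (+) S r t) c =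
  symd (chain_map R c) (chain_map S c).
Proof.
apply/setP=> t; rewrite in_symd !chain_mapE -oddD -big_split /=.
by rewrite odd_sum_odd [RHS]odd_sum_odd; congr odd; apply: eq_bigr => s _;
  case: (R s t); case: (S s t).
Qed.

Lemma chain_map_symd R A B :
  chain_map R (symd A B) = symd (chain_map R A) (chain_map R B).
Proof.
apply/setP=> t; rewrite in_symd !chain_map_sumE -oddD -big_split /=.
rewrite odd_sum_odd [RHS]odd_sum_odd; congr odd; apply: eq_bigr => s _.
by rewrite in_symd; case: (s \in A); case: (s \in B); case: (R s t).
Qed.

Lemma chain_map_id c : chain_map (fun r t => t == r) c = c.
Proof.
apply/setP=> t; rewrite chain_map_sumE (bigD1 t) //= eqxx muln1.
rewrite big1 ?addn0 ?oddb // => s; rewrite eq_sym => /negbTE->.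
by rewrite muln0.
Qed.

Lemma chain_map_set1 R r : chain_map R [set r] = [set t | R r t].
Proof. by apply/setP=> t; rewrite chain_mapE big_set1 inE oddb. Qed.

Lemma chain_map_set0 R : chain_map R set0 = set0.
Proof. by apply/setP=> t; rewrite chain_mapE big_set0 inE. Qed.

Lemma bdry_set1 r t : (t \in bdry [set r]) = facet r t.
Proof. by rewrite bdryE chain_map_set1 inE. Qed.

Lemma bdry_symd A B : bdry (symd A B) = symd (bdry A) (bdry B).
Proof. exact: chain_map_symd. Qed.

Lemma cext_set0 f : cext f set0 = set0.
Proof. exact: chain_map_set0. Qed.

Lemma mem_cext f c s : s \in cext f c -> exists2 r, r \in c & s \in f r.
Proof.
by rewrite inE => /odd_gt0/card_gt0P [r]; rewrite !inE => /andP [rc sr];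
  exists r.
Qed.

Lemma eq_cext f g c : {in c, f =1 g} -> cext f c = cext g c.
Proof. by move=> eqfg; apply: eq_chain_map => r /eqfg ->. Qed.

Lemma facet_facet_card r t :
  #|[set s in [set: {set V}] | facet r s && facet s t]| =
  (if (t \subset r) && (#|r| == #|t|.+2) then 2 else 0).
Proof.
case: ifP => [/andP [tr /eqP cr] | not_two_below].
  rewrite (_ : [set s in _ | _] = [set x |: t | x in r :\: t]).
    rewrite card_in_imset; first by rewrite cardsD (setIidPr tr) cr -addn2 addKn.
    move=> x y; rewrite !inE => /andP [xt _] /andP [yt _] e.
    have : x \in y |: t by rewrite -e setU11.
    by rewrite !inE (negbTE xt) orbF => /eqP.
  apply/setP => s; rewrite !inE /= /facet; apply/idP/imsetP.
    move=> /andP [/andP [sr /eqP cs] /andP [ts /eqP cst]].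
    have /cards1P [x sx] : #|s :\: t| == 1.
      by rewrite cardsD (setIidPr ts) cst subSn // subnn.
    have /setDP [xs xt] : x \in s :\: t by rewrite sx set11.
    exists x; first by rewrite inE xt (subsetP sr).
    apply/setP => y; have := congr1 (fun B : {set V} => y \in B) sx.
    rewrite /= !inE; case yt: (y \in t); first by rewrite orbT (subsetP ts).
    by rewrite orbF => <-.
  move=> [x /setDP [xr xt] ->].
  by rewrite subUset sub1set xr tr subsetUr cardsU1 xt cr /= !eqxx.
apply/eqP; rewrite cards_eq0; apply/eqP/setP => s; rewrite !inE /= /facet.
apply/negP => /andP [/andP [sr /eqP cs] /andP [ts /eqP cst]].
by rewrite (subset_trans ts sr) cs cst eqxx in not_two_below.
Qed.

Lemma bdry_bdry c : bdry (bdry c) = set0.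
Proof.
rewrite !bdryE chain_map_comp (eq_chain_map (S := fun _ _ => false)).
  by apply/setP=> t; rewrite chain_mapE big1 ?inE.
move=> r _ t.
have -> : \sum_s facet r s * facet s t =
          \sum_(s in [set: {set V}]) (facet r s && facet s t).
  by apply: eq_big => [s | s _]; rewrite ?inE ?mulnb.
by rewrite -card_set_sum facet_facet_card; case: ifP.
Qed.

Definition cone_at f r := bdry (f r) = symd [set r] (cext f (bdry [set r])).

Lemma bdry_cext f c : {in c, forall r, cone_at f r} ->
  bdry (cext f c) = symd c (cext f (bdry c)).
Proof.
move=> cone_f.
rewrite bdryE cextE chain_map_comp.
rewrite (eq_chain_map (S := fun r t => (t == r) (+) (t \in cext f (bdry [set r])))).
  rewrite chain_map_addr chain_map_id; congr symd.
  rewrite bdryE cextE chain_map_comp; apply: eq_chain_map => r _ t.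
  by rewrite bdryE cextE chain_map_comp chain_map_set1 inE.
move=> r rc t; have /setP /(_ t) := cone_f r rc.
by rewrite in_symd in_set1 bdryE chain_map_sumE.
Qed.

Lemma bdry_cext_cycle f c : {in c, forall r, cone_at f r} -> bdry c = set0 ->
  bdry (cext f c) = c.
Proof. by move=> cone_f c_cycle; rewrite bdry_cext // c_cycle cext_set0 symds0. Qed.

Lemma bdry_cone_defect f r : {in bdry [set r], forall t, cone_at f t} ->
  bdry (symd [set r] (cext f (bdry [set r]))) = set0.
Proof.
by move=> cone_f; rewrite bdry_symd bdry_cext // bdry_bdry cext_set0 symds0 symdss.
Qed.

Lemma bdry_set1_set0 : bdry [set set0 : {set V}] = set0.
Proof. by apply/setP=> t; rewrite bdry_set1 /facet cards0 inE andbF. Qed.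

Lemma bdry_vertex (x : V) : bdry [set [set x]] = [set set0].
Proof.
apply/setP=> t; rewrite bdry_set1 /facet cards1 inE eqSS eq_sym cards_eq0.
by case: eqP => [-> | _]; rewrite ?sub0set ?andbF.
Qed.

Lemma verts_cext f c W w :
  (forall r s, r \in c -> s \in f r -> [disjoint s & W :\: r]) ->
  w \in W -> w \in verts (cext f c) -> w \in verts c.
Proof.
move=> disj wW /bigcupP [s /mem_cext [r rc sfr] ws]; apply/bigcupP; exists r => //.
by have := disjointFr (disj r s rc sfr) ws; rewrite !inE wW andbT => /negbFE.
Qed.

Lemma cdelS K (W1 W2 : {set V}) : W2 \subset W1 -> cdel K W1 \subset cdel K W2.
Proof.
move=> sW21; apply/subsetP => s; rewrite !inE => /andP [-> dis1] /=.
exact: disjointWr sW21 dis1.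
Qed.

Lemma cdel_setD_self K W s : s \in K -> s \in cdel K (W :\: s).
Proof.
move=> sK; rewrite inE sK disjoint_subset; apply/subsetP => x xs.
by rewrite !inE xs.
Qed.

End Chains.

Section ConeConstruction.
Variables (V : finType) (M : {set {set V}}) (A : {set V} -> {set {set V}}).
Variables (v0 : V) (d : nat).
Implicit Types (s t : {set V}) (f : {set V} -> {set {set V}}).

Hypothesis M_closed : forall s t, s \in M -> t \subset s -> t != set0 -> t \in M.
Hypothesis A_mono : forall s t, t \subset s -> A t \subset A s.
Hypothesis A_self : {in M, forall s, s \in A s}.
Hypothesis A_v0 : [set v0] \in A set0.
Hypothesis A_acyclic : {in M, forall s, #|s| <= d -> rhom_vanish (A s) #|s|.-1}.

Definition admissible s := (s == set0) || (s \in M).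

Definition cone_face f s := f s \subset faces (A s) #|s| /\ cone_at f s.

Lemma admissible_facet s t : admissible s -> facet s t -> admissible t.
Proof.
rewrite /admissible /facet => /orP [/eqP -> | sM] /andP [ts _].
  by rewrite subset0 in ts; rewrite ts.
by case: eqP => //= /eqP t0; apply: M_closed sM ts t0.
Qed.

Lemma cone_defect_faces f s n : s \in M -> #|s| = n.+1 ->
  (forall t, facet s t -> f t \subset faces (A t) n) ->
  symd [set s] (cext f (bdry [set s])) \subset faces (A s) n.
Proof.
move=> sM cs f_faces; apply/subsetP => x; rewrite in_symd in_set1.
case: eqP => [-> _ | _ /= /mem_cext [t]]; first by rewrite inE A_self // cs eqxx.
rewrite bdry_set1 => st /(subsetP (f_faces t st)); rewrite !inE => /andP [xA ->].
by case/andP: st => ts _; rewrite (subsetP (A_mono ts)).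
Qed.

Lemma cone_step n f : n < d ->
    (forall s, admissible s -> #|s| <= n -> cone_face f s) ->
  exists g, forall s, admissible s -> #|s| <= n.+1 -> cone_face g s.
Proof.
move=> lt_nd cone_f.
have cone_facets s : admissible s -> #|s| = n.+1 ->
    forall t, facet s t -> #|t| = n /\ cone_face f t.
  move=> adm_s cs t st; have /andP [_ /eqP] := st; rewrite cs => -[ct].
  by split; last apply: cone_f (admissible_facet adm_s st) _; rewrite ct.
have fill s : exists b : {set {set V}}, s \in M -> #|s| = n.+1 ->
    b \subset faces (A s) n.+1 /\ bdry b = symd [set s] (cext f (bdry [set s])).
  have [/andP [sM /eqP cs] | no] := boolP ((s \in M) && (#|s| == n.+1)); last first.
    by exists set0 => sM cs; rewrite sM cs eqxx in no.
  have adm_s : admissible s by rewrite /admissible sM orbT.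
  have facet_faces t : facet s t -> f t \subset faces (A t) n.
    by move=> st; have [<- []] := cone_facets s adm_s cs t st.
  have facet_cone : {in bdry [set s], forall t, cone_at f t}.
    by move=> t; rewrite bdry_set1 => st; have [_ []] := cone_facets s adm_s cs t st.
  have := A_acyclic sM; rewrite cs => /(_ lt_nd) vanish.
  have [b bA bb] := vanish _ (cone_defect_faces sM cs facet_faces)
                             (bdry_cone_defect facet_cone).
  by exists b.
have [g0 g0P] := fin_all_exists fill.
pose g s := if #|s| == n.+1 then g0 s else f s.
have g_facets s : #|s| <= n.+1 -> cext g (bdry [set s]) = cext f (bdry [set s]).
  move=> cs; apply: eq_cext => t; rewrite bdry_set1 => /andP [_ /eqP cst].
  by rewrite /g ltn_eqF // -ltnS -cst.
exists g => s adm_s cs; rewrite /cone_face /cone_at g_facets // /g.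
case: eqP => [cs' | /eqP ncs]; last first.
  by apply: cone_f adm_s _; rewrite -ltnS ltn_neqAle ncs.
have sM : s \in M.
  by move: adm_s; rewrite /admissible -cards_eq0 cs' orFb.
by rewrite cs'; exact: g0P.
Qed.

Lemma exists_cone :
  exists f, forall s, admissible s -> #|s| <= d -> cone_face f s.
Proof.
suff cone_upto n : n <= d ->
    exists f, forall s, admissible s -> #|s| <= n -> cone_face f s.
  exact: cone_upto.
elim: n => [_ | n IH lt_nd]; last first.
  by have [f cone_f] := IH (ltnW lt_nd); exact: cone_step lt_nd cone_f.
exists (fun _ => [set [set v0]]) => s _; rewrite leqn0 cards_eq0 => /eqP ->.
split; first by rewrite sub1set inE A_v0 cards1 cards0.
by rewrite /cone_at bdry_vertex bdry_set1_set0 cext_set0 symds0.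
Qed.

End ConeConstruction.

Section Flip.
Variables (V : finType) (d : nat) (P Q : {set V}) (K : {set {set V}}).
Implicit Types (s t : {set V}).

Let T := skel_join_bd d P Q.
Let T' := skel_join_bd d Q P.
Let L := (K :\: T) :|: T'.

Hypothesis K_closed : forall s t, s \in K -> t \subset s -> t != set0 -> t \in K.
Hypothesis K_dim : forall s, s \in K -> #|s| <= d.+1.
Hypothesis T_induced : forall s, s \in K -> s \subset P :|: Q -> s \in T.
Hypothesis T_apex : forall s, s \in K -> P \subset s -> s \in T.
Hypothesis link_acyclic : forall rho, rho = set0 \/ rho \in T :&: T' ->
  forall i, i <= d.-1 -> rhom_vanish (cdel K (verts T :\: rho)) i.

Lemma in_skel_join_bd (X Y : {set V}) s : (s \in skel_join_bd d X Y) =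
  [&& s != set0, s \subset X :|: Y, ~~ (Y \subset s) & #|s| <= d.+1].
Proof. by rewrite inE. Qed.

Lemma verts_skel_join_bd (X Y : {set V}) : verts (skel_join_bd d X Y) \subset X :|: Y.
Proof. by apply/bigcupsP => s; rewrite in_skel_join_bd => /and4P []. Qed.

Lemma KL_not_apex s : s \in K :&: L -> ~~ (P \subset s).
Proof.
case/setIP => sK; apply: contraL => Ps.
by rewrite in_setU in_setD T_apex //= in_skel_join_bd Ps !andbF.
Qed.

Lemma cdel_KL_in_L s t : s \in K :&: L -> t \in cdel K (verts T :\: s) -> t \in L.
Proof.
move=> sKL; rewrite inE => /andP [tK dis]; apply: contraT.
rewrite in_setU in_setD tK andbT negb_or negbK => /andP [tT].
have tT0 : t \subset verts T by apply: bigcup_sup tT.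
have ts : t \subset s.
  apply/subsetP => x xt; have := disjointFr dis xt.
  by rewrite !inE (subsetP tT0) // andbT => /negbFE.
move: tT; rewrite !in_skel_join_bd => /and4P [-> tPQ _ ->].
rewrite setUC tPQ andbT /= negbK => Pt.
by have := KL_not_apex sKL; rewrite (subset_trans Pt ts).
Qed.

Lemma KL_closed s t : s \in K :&: L -> t \subset s -> t != set0 -> t \in K :&: L.
Proof.
move=> sKL ts t0; have /setIP [sK _] := sKL.
have tK := K_closed sK ts t0.
rewrite inE tK (cdel_KL_in_L sKL) // inE tK disjoint_subset.
by apply/subsetP => x /(subsetP ts) xs; rewrite !inE xs.
Qed.

Lemma KL_acyclic s : s \in K :&: L -> #|s| <= d ->
  rhom_vanish (cdel K (verts T :\: s)) #|s|.-1.
Proof.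
move=> sKL cs; have /setIP [sK _] := sKL.
have -> : verts T :\: s = verts T :\: (s :&: verts T).
  by apply/setP => x; rewrite !inE; case: (x \in verts T); rewrite ?andbT ?andbF.
apply: link_acyclic; last by rewrite -!subn1 leq_sub2r.
have [-> | s'0] := eqVneq (s :&: verts T) set0; [by left | right].
have s'K : s :&: verts T \in K by apply: K_closed sK (subsetIl _ _) s'0.
have s'PQ : s :&: verts T \subset P :|: Q.
  exact: subset_trans (subsetIr _ _) (verts_skel_join_bd _ _).
rewrite in_setI T_induced //= in_skel_join_bd s'0 setUC s'PQ K_dim // andbT /=.
apply: contra (KL_not_apex sKL) => /subset_trans; apply; exact: subsetIl.
Qed.

End Flip.

Theorem lemma11 (V : finType) (d p q : nat) (P Q : {set V})
  (K : {set {set V}}) (v0 : V) :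
  1 <= d -> p + q = d.*2 ->
  [disjoint P & Q] -> #|P| = p.+1 -> #|Q| = q.+1 ->
  is_complex K -> (forall s, s \in K -> #|s| <= d.+1) ->
  (exists2 s, s \in K & #|s| = d.+1) ->
  let T := skel_join_bd d P Q in
  let T' := skel_join_bd d Q P in
  let L := (K :\: T) :|: T' in
  T \subset K -> (forall s, s \in K -> s \subset P :|: Q -> s \in T) ->
  (forall s, s \in K -> P \subset s -> s \in T) ->
  v0 \in verts K :\: verts T ->
  (forall rho : {set V}, rho = set0 \/ rho \in T :&: T' ->
     forall i, i <= d.-1 -> rhom_vanish (cdel K (verts T :\: rho)) i) ->
  exists f : {set V} -> {set {set V}},
    (forall i rho, i <= d.-1 -> rho \in faces (K :&: L) i ->
       f rho \subset faces (K :&: L) i.+1) /\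
    (forall i (th : {set {set V}}), i <= d.-1 -> th \subset faces (K :&: L) i ->
       (forall w, w \in verts T -> w \in verts (cext f th) -> w \in verts th) /\
       (bdry th = set0 -> bdry (cext f th) = th)).
Proof.
move=> d_gt0 _ _ _ _ [_ K_closed] K_dim _ T T' L _ T_induced T_apex v0_fresh
  link_acyclic.
pose A s := cdel K (verts T :\: s).
have A_v0 : [set v0] \in A set0.
  have /setDP [/bigcupP [s sK v0s] v0T] := v0_fresh.
  rewrite inE setD0 disjoints1 v0T andbT.
  apply: K_closed sK _ _; first by rewrite sub1set.
  by apply/set0Pn; exists v0; rewrite set11.
have [f cone_f] := exists_cone (A := A) (v0 := v0)
  (KL_closed K_closed T_apex) (fun s t ts => cdelS K (setDS _ ts))
  (fun s sKL => cdel_setD_self _ (setIP sKL).1) A_v0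
  (KL_acyclic K_closed K_dim T_induced T_apex link_acyclic).
have face_cone i s : i <= d.-1 -> s \in faces (K :&: L) i -> cone_face A f s.
  move=> le_i /setIdP [sKL /eqP cs]; apply: cone_f; first by rewrite /admissible sKL orbT.
  by rewrite cs -(prednK d_gt0) ltnS.
exists f; split=> [i s le_i sF | i th le_i thF].
  have [fA _] := face_cone i s le_i sF; have /setIdP [sKL /eqP cs] := sF.
  apply/subsetP => t /(subsetP fA) /setIdP [tA /eqP ct].
  have /setIdP [tK _] := tA.
  by rewrite inE in_setI tK (cdel_KL_in_L T_apex sKL tA) ct cs /=.
have cone_th : {in th, forall s, cone_face A f s}.
  by move=> s /(subsetP thF); apply: face_cone.
split; last by move=> th_cycle; apply: bdry_cext_cycle => // r /cone_th [].
move=> w; apply: verts_cext => r s /cone_th [fA _] /(subsetP fA) /setIdP [].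
by case/setIdP.
Qed.
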